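(* If $E$ is a hereditary approximation space having a countable basis, then $\bigcup_{\alpha<\aleph_1}\mathbf{D}_\alpha(E)=\mathbf{\Delta}^0_2(E)$.
   Context: Approximation relation: a binary relation $\ll$ on a topological basis $\mathcal{B}$ of $E$ such that for all $U,V,T\in\mathcal{B}$: (1) $U\ll V\Rightarrow V\subseteq U$; (2) $U\subseteq T$ and $U\ll V$ imply $T\ll V$; (3) for every $x\in U$ there is $W\in\mathcal{B}$ with $x\in W$ and $U\ll W$; (4) every sequence $(U_i)$ in $\mathcal{B}$ with $U_i\ll U_{i+1}$ for all $i$ has $\bigcap_iU_i\ne\emptyset$. Hereditary: for every closed $C\subseteq E$, the relation $\ll_C$ on $\{C\cap U:U\in\mathcal{B},C\cap U\ne\emptyset\}$, given by $P\ll_C Q$ iff $P=C\cap U$, $Q=C\cap V$ for some $U,V\in\mathcal{B}$ with $U\ll V$, is an approximation relation for the subspace $C$. A hereditary approximation space is one admitting a hereditary approximation relation. $\mathbf{\Sigma}^0_2(E)$: countable unions of differences $U\setminus V$ of open sets; $\mathbf{\Pi}^0_2(E)$: complements; $\mathbf{\Delta}^0_2(E)$: their intersection. Parity: ordinal $\lambda+n$ ($\lambda$ zero or limit, $n<\omega$) has the parity of $n$; $\alpha\sim\beta$ means same parity. $D_\alpha((A_\beta)_{\beta<\alpha})=\bigcup_{\beta<\alpha,\beta\not\sim\alpha}(A_\beta\setminus\bigcup_{\gamma<\beta}A_\gamma)$, and $\mathbf{D}_\alpha(E)$ is the class of such sets with all $A_\beta$ open. *)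

From Stdlib Require Import Classical.

Definition set (E : Type) := E -> Prop.

Record topology (E : Type) := Topology {
  open : set E -> Prop;
  open_full : open (fun _ => True);
  open_union : forall F : set E -> Prop,
      (forall U, F U -> open U) -> open (fun x => exists U, F U /\ U x);
  open_inter : forall U V, open U -> open V -> open (fun x => U x /\ V x)
}.
Arguments open {E} t _.

Definition closed {E} (T : topology E) (C : set E) : Prop :=
  open T (fun x => ~ C x).

Definition subset {E} (A B : set E) : Prop := forall x, A x -> B x.

Definition is_basis {E} (T : topology E) (B : set E -> Prop) : Prop :=
  (forall U, B U -> open T U) /\
  (forall U x, open T U -> U x -> exists W, B W /\ W x /\ subset W U).

Definition second_countable {E} (T : topology E) : Prop :=
  exists (B : set E -> Prop) (b : nat -> set E),
    is_basis T B /\ forall U, B U -> exists n, U = b n.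

(* Conditions (1)-(4) for a relation [rel] on the family [Bf] of subsets of
   the space [S] (a subset of E; S is the whole of E for the space itself,
   a closed subset C for the subspace C). *)
Definition approx_conditions {E} (S : set E) (Bf : set E -> Prop)
    (rel : set E -> set E -> Prop) : Prop :=
  (forall U V, Bf U -> Bf V -> rel U V -> subset V U) /\
  (forall U V T, Bf U -> Bf V -> Bf T -> subset U T -> rel U V -> rel T V) /\
  (forall U x, Bf U -> S x -> U x -> exists W, Bf W /\ W x /\ rel U W) /\
  (forall Us : nat -> set E, (forall i, Bf (Us i)) ->
      (forall i, rel (Us i) (Us (Datatypes.S i))) ->
      exists x, S x /\ forall i, Us i x).

Definition approx_relation {E} (T : topology E) (B : set E -> Prop)
    (rel : set E -> set E -> Prop) : Prop :=
  is_basis T B /\ approx_conditions (fun _ => True) B rel.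

Definition trace_family {E} (B : set E -> Prop) (C : set E) (P : set E) : Prop :=
  exists U, B U /\ (forall x, P x <-> C x /\ U x) /\ (exists x, C x /\ U x).

Definition trace_rel {E} (B : set E -> Prop) (rel : set E -> set E -> Prop)
    (C : set E) (P Q : set E) : Prop :=
  exists U V, B U /\ B V /\ (forall x, P x <-> C x /\ U x) /\
              (forall x, Q x <-> C x /\ V x) /\ rel U V.

Definition hereditary_approx_relation {E} (T : topology E) (B : set E -> Prop)
    (rel : set E -> set E -> Prop) : Prop :=
  approx_relation T B rel /\
  forall C, closed T C ->
    approx_conditions C (trace_family B C) (trace_rel B rel C).

Definition hereditary_approx_space {E} (T : topology E) : Prop :=
  exists B rel, hereditary_approx_relation T B rel.

Definition Sigma02 {E} (T : topology E) (S : set E) : Prop :=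
  exists U V : nat -> set E, (forall n, open T (U n)) /\ (forall n, open T (V n)) /\
    forall x, S x <-> exists n, U n x /\ ~ V n x.

Definition Pi02 {E} (T : topology E) (S : set E) : Prop :=
  Sigma02 T (fun x => ~ S x).

Definition Delta02 {E} (T : topology E) (S : set E) : Prop :=
  Sigma02 T S /\ Pi02 T S.

(* A countable ordinal alpha < aleph_1 is represented by a countable
   well-ordered type (its set of predecessors {beta | beta < alpha}). *)
Record cord := Cord {
  ci : Type;
  clt : ci -> ci -> Prop;
  clt_irrefl : forall x, ~ clt x x;
  clt_trans : forall x y z, clt x y -> clt y z -> clt x z;
  clt_total : forall x y, clt x y \/ x = y \/ clt y x;
  clt_wf : well_founded clt;
  cenc : ci -> nat;
  cenc_inj : forall x y, cenc x = cenc y -> x = y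
}.

Definition osucc {I} (lt : I -> I -> Prop) (g b : I) : Prop :=
  lt g b /\ forall d, lt g d -> ~ lt d b.

(* parity of an element beta = lambda + n (lambda zero or limit):
   [opar lt beta p] iff n is odd exactly when p = true. *)
Inductive opar {I} (lt : I -> I -> Prop) : I -> bool -> Prop :=
| opar_lim : forall b, ~ (exists g, osucc lt g b) -> opar lt b false
| opar_succ : forall g b p, osucc lt g b -> opar lt g p -> opar lt b (negb p).

(* parity of the ordinal alpha itself (the order type of ci a) *)
Definition tpar (a : cord) (p : bool) : Prop :=
  (exists m, (forall y, ~ clt a m y) /\ opar (clt a) m (negb p)) \/
  ((~ exists m, forall y, ~ clt a m y) /\ p = false).

Definition D_op {E} (a : cord) (A : ci a -> set E) : set E :=
  fun x => exists b : ci a,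
    (exists pb pa, opar (clt a) b pb /\ tpar a pa /\ pb <> pa) /\
    A b x /\ forall g, clt a g b -> ~ A g x.

Definition D_class {E} (T : topology E) (a : cord) (S : set E) : Prop :=
  exists A : ci a -> set E, (forall b, open T (A b)) /\
    forall x, S x <-> D_op a A x.

Definition D_union {E} (T : topology E) (S : set E) : Prop :=
  exists a : cord, D_class T a S.

(* A point lies in D_alpha((A_b)_b) iff its first index
   (the least b with x ∈ A_b) has parity opposite to alpha.  "The first index
   satisfies P" is Sigma^0_2 for every P, and the complement of D_alpha is
   such a set together with the closed set E \ ⋃_b A_b.

   Delta^0_2 ⊆ ⋃ D_alpha, for a Delta^0_2 set A.
   1. Baire property: on a closed set C the relation ≪_C yields a point of C
      outside countably many differences of open sets that each miss a point
      of C in every basic set; hence A is constant on C ∩ W for some open W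
      meeting C (a "patch" of C).
   2. The oscillation derivative der G (points of G near which A takes both
      values on G) is iterated transfinitely; its stages, the least family
      closed under der and intersections, form a chain, and by 1. no nonempty
      stage equals its derivative.
   3. The nonempty stages, each doubled, ordered by reverse inclusion, form a
      well-order, countable because patches can be taken basic and distinct
      stages have distinct patches.
   4. Indexing the open sets E \ der F and (E \ F) ∪ {points near which A
      fails on F} by this ordinal presents A as a set of D_alpha. *)

From Stdlib Require Import Classical FunctionalExtensionality PropExtensionality
  ProofIrrelevance ClassicalEpsilon Lia Arith.

Lemma set_ext {E} (A B : set E) : (forall x, A x <-> B x) -> A = B.
Proof.
  intro H. apply functional_extensionality. intro x.
  apply propositional_extensionality. apply H.
Qed.

Section OpenSets.
Context {E : Type} (T : topology E).

Lemma open_family (F : set E -> Prop) (B : set E) :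
  (forall U, F U -> open T U) -> (forall x, B x <-> exists U, F U /\ U x) -> open T B.
Proof.
  intros HF HB. rewrite (set_ext B (fun x => exists U, F U /\ U x) HB).
  exact (open_union _ T F HF).
Qed.

Lemma open_or (U V : set E) : open T U -> open T V -> open T (fun x => U x \/ V x).
Proof.
  intros HU HV. apply (open_family (fun W => W = U \/ W = V)).
  - intros W [-> | ->]; assumption.
  - intro x; split.
    + intros [H | H]; eauto.
    + intros [W [[-> | ->] H]]; auto.
Qed.

Lemma Sigma02_ext (S S' : set E) :
  Sigma02 T S -> (forall x, S x <-> S' x) -> Sigma02 T S'.
Proof. intros HS Heq. rewrite <- (set_ext S S' Heq). exact HS. Qed.

Lemma Sigma02_add (U0 V0 S : set E) :
  open T U0 -> open T V0 -> Sigma02 T S ->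
  Sigma02 T (fun x => (U0 x /\ ~ V0 x) \/ S x).
Proof.
  intros HU0 HV0 [U [V [HU [HV HS]]]].
  exists (fun n => match n with 0 => U0 | Datatypes.S m => U m end).
  exists (fun n => match n with 0 => V0 | Datatypes.S m => V m end).
  split; [intros [|n]; auto | split; [intros [|n]; auto |]].
  intro x. rewrite HS. split.
  - intros [H | [n Hn]]; [exists 0 | exists (Datatypes.S n)]; exact H || exact Hn.
  - intros [[|n] Hn]; [left | right; exists n]; exact Hn.
Qed.

End OpenSets.

Lemma well_founded_of_minimal {X} (R : X -> X -> Prop) :
  (forall P : X -> Prop, (exists x, P x) -> exists x, P x /\ forall y, R y x -> ~ P y) ->
  well_founded R.
Proof.
  intros Hmin x. apply NNPP; intro Hx.
  destruct (Hmin (fun x => ~ Acc R x)) as [m [Hm Hmmin]]; [eauto|].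
  apply Hm. constructor. intros y Hy. apply NNPP. exact (Hmmin y Hy).
Qed.

Section CountableOrdinals.
Variable a : cord.

Lemma clt_least (P : ci a -> Prop) :
  (exists b, P b) -> exists b, P b /\ forall g, clt a g b -> ~ P g.
Proof.
  intros [b Pb]. apply NNPP; intro Hno.
  induction (clt_wf a b) as [b _ IH].
  apply Hno. exists b. split; [exact Pb|]. intros g Hg Pg. exact (IH g Hg Pg).
Qed.

Lemma clt_eq (b b' : ci a) : ~ clt a b b' -> ~ clt a b' b -> b = b'.
Proof. intros H1 H2. destruct (clt_total a b b') as [H | [H | H]]; tauto. Qed.

Lemma osucc_unique (g g' b : ci a) :
  osucc (clt a) g b -> osucc (clt a) g' b -> g = g'.
Proof.
  intros [Hg Hgmin] [Hg' Hg'min]. apply clt_eq.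
  - intro H. exact (Hgmin g' H Hg').
  - intro H. exact (Hg'min g H Hg).
Qed.

Lemma opar_unique (b : ci a) p q : opar (clt a) b p -> opar (clt a) b q -> p = q.
Proof.
  intro Hp. revert q.
  induction Hp as [b Hb | g b p Hs Hp IH]; intros q Hq; inversion Hq; subst.
  - reflexivity.
  - exfalso. apply Hb. eauto.
  - exfalso. apply H. eauto.
  - rewrite (osucc_unique _ _ _ Hs H) in IH. rewrite (IH _ H0). reflexivity.
Qed.

Lemma tpar_unique p q : tpar a p -> tpar a q -> p = q.
Proof.
  intros [[m [Hm Hp]] | [Hm Hp]] [[m' [Hm' Hq]] | [Hm' Hq]].
  - assert (m = m') as <- by (apply clt_eq; auto).
    pose proof (opar_unique _ _ _ Hp Hq). destruct p, q; simpl in *; congruence.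
  - exfalso. apply Hm'. eauto.
  - exfalso. apply Hm. eauto.
  - congruence.
Qed.

End CountableOrdinals.

Section DifferenceHierarchy.
Context {E : Type} (T : topology E) (a : cord) (A : ci a -> set E).
Hypothesis A_open : forall b, open T (A b).

Definition selected (b : ci a) : Prop :=
  exists pb pa, opar (clt a) b pb /\ tpar a pa /\ pb <> pa.

Definition first_index (b : ci a) : set E :=
  fun x => A b x /\ forall g, clt a g b -> ~ A g x.

Lemma first_index_unique b b' x : first_index b x -> first_index b' x -> b = b'.
Proof.
  intros [Ab Hb] [Ab' Hb']. apply clt_eq.
  - intro H. exact (Hb' b H Ab).
  - intro H. exact (Hb b' H Ab').
Qed.

Lemma D_op_first_index x : D_op a A x <-> exists b, selected b /\ first_index b x.
Proof. reflexivity. Qed.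

(* "The first index of x satisfies P" is Sigma^0_2: it is the union over
   the codes n of A b \ ⋃_(g<b) A g, b being the index coded by n. *)
Lemma first_index_Sigma02 (P : ci a -> Prop) :
  Sigma02 T (fun x => exists b, P b /\ first_index b x).
Proof.
  exists (fun n x => exists b, cenc a b = n /\ P b /\ A b x).
  exists (fun n x => exists b, cenc a b = n /\ exists g, clt a g b /\ A g x).
  split; [|split].
  - intro n. apply (open_family T (fun W => exists b, cenc a b = n /\ P b /\ W = A b)).
    + intros W [b [_ [_ ->]]]. apply A_open.
    + intro x; split.
      * intros [b [Hn [Pb Ab]]]. exists (A b). eauto.
      * intros [W [[b [Hn [Pb ->]]] Ab]]. eauto.
  - intro n.
    apply (open_family T (fun W => exists b g, cenc a b = n /\ clt a g b /\ W = A g)).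
    + intros W [b [g [_ [_ ->]]]]. apply A_open.
    + intro x; split.
      * intros [b [Hn [g [Hg Ag]]]]. exists (A g). eauto 6.
      * intros [W [[b [g [Hn [Hg ->]]]] Ag]]. eauto.
  - intro x; split.
    + intros [b [Pb [Ab Hmin]]]. exists (cenc a b). split; [eauto|].
      intros [b' [Hb' [g [Hg Ag]]]]. apply cenc_inj in Hb'. subst b'.
      exact (Hmin g Hg Ag).
    + intros [n [[b [Hn [Pb Ab]]] Hnot]]. exists b. repeat split; auto.
      intros g Hg Ag. apply Hnot. eauto.
Qed.

Lemma not_D_op x :
  ~ D_op a A x <->
  ((True /\ ~ exists b, A b x) \/ exists b, ~ selected b /\ first_index b x).
Proof.
  rewrite D_op_first_index. split.
  - intro HD. destruct (classic (exists b, A b x)) as [Hb | Hb]; [right | left; tauto].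
    destruct (clt_least a _ Hb) as [b [Ab Hmin]].
    exists b. split; [|split; assumption].
    intro Hs. apply HD. exists b. split; [exact Hs | split; assumption].
  - intros [[_ Hnone] | [b [Hns Hb]]] [b' [Hs Hb']].
    + apply Hnone. exists b'. apply Hb'.
    + rewrite (first_index_unique _ _ _ Hb Hb') in Hns. exact (Hns Hs).
Qed.

Lemma D_op_Delta02 : Delta02 T (D_op a A).
Proof.
  split.
  - exact (first_index_Sigma02 selected).
  - eapply Sigma02_ext; [| exact (fun x => iff_sym (not_D_op x))].
    apply Sigma02_add.
    + apply open_full.
    + apply (open_family T (fun W => exists b, W = A b)).
      * intros W [b ->]. apply A_open.
      * intro x; split.
        -- intros [b Ab]. eauto.
        -- intros [W [[b ->] Ab]]. eauto.
    + exact (first_index_Sigma02 (fun b => ~ selected b)).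
Qed.

End DifferenceHierarchy.

Lemma D_class_Delta02 {E} (T : topology E) (a : cord) (S : set E) :
  D_class T a S -> Delta02 T S.
Proof.
  intros [A [HA HS]]. rewrite (set_ext _ _ HS). exact (D_op_Delta02 T a A HA).
Qed.
Definition constant_on {E} (F W A : set E) : Prop :=
  (forall z, F z -> W z -> A z) \/ (forall z, F z -> W z -> ~ A z).

Section Baire.
Context {E : Type} (T : topology E) (B : set E -> Prop) (rel : set E -> set E -> Prop)
  (C : set E).
Hypothesis B_basis : is_basis T B.
Hypothesis C_approx : approx_conditions C (trace_family B C) (trace_rel B rel C).

Lemma trace_refine (Q Q2 : set E) :
  trace_family B C Q -> trace_family B C Q2 -> subset Q2 Q ->
  exists W, trace_family B C W /\ trace_rel B rel C Q W /\ subset W Q2.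
Proof.
  destruct C_approx as [Hsub [Hmono [Hpoint _]]].
  intros HQ HQ2 HQ2Q. pose proof HQ2 as [U2 [_ [HU2 [z [Cz U2z]]]]].
  destruct (Hpoint Q2 z HQ2 Cz (proj2 (HU2 z) (conj Cz U2z))) as [W [HW [_ HQ2W]]].
  exists W. split; [exact HW | split].
  - exact (Hmono Q2 W Q HQ2 HW HQ HQ2Q HQ2W).
  - exact (Hsub Q2 W HQ2 HW HQ2W).
Qed.

Lemma trace_shrink (U V Q : set E) :
  open T U -> open T V ->
  (forall W, B W -> (exists z, C z /\ W z) -> exists z, C z /\ W z /\ ~ (U z /\ ~ V z)) ->
  trace_family B C Q ->
  exists Q2, trace_family B C Q2 /\ subset Q2 Q /\ forall y, Q2 y -> ~ (U y /\ ~ V y).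
Proof.
  destruct B_basis as [B_open B_base].
  intros HU HV Hmiss HQ. pose proof HQ as [U0 [HU0 [HQU0 _]]].
  destruct (classic (exists y, C y /\ U0 y /\ U y)) as [[y [Cy [U0y Uy]]] | Hdisj].
  - destruct (B_base (fun w => U0 w /\ U w) y) as [B1 [HB1 [B1y sB1]]];
      [apply open_inter; auto | auto |].
    destruct (Hmiss B1 HB1) as [z [Cz [B1z Hz]]]; [eauto|].
    assert (Vz : V z) by (apply NNPP; intro; apply Hz; split; [apply sB1|]; auto).
    destruct (B_base (fun w => B1 w /\ V w) z) as [B2 [HB2 [B2z sB2]]];
      [apply open_inter; auto | auto |].
    exists (fun w => C w /\ B2 w). split; [|split].
    + exists B2. split; [exact HB2 | split; [tauto | eauto]].
    + intros w [Cw B2w]. apply HQU0. split; [exact Cw|].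
      apply sB1. apply sB2. exact B2w.
    + intros w [_ B2w] [_ nVw]. apply nVw. apply sB2. exact B2w.
  - exists Q. split; [exact HQ | split; [intros w Hw; exact Hw|]].
    intros w Qw [Uw _]. apply HQU0 in Qw. apply Hdisj. exists w. tauto.
Qed.

Lemma approx_Baire (W Z : nat -> set E) :
  (exists x, C x) -> (forall k, open T (W k)) -> (forall k, open T (Z k)) ->
  (forall k U, B U -> (exists z, C z /\ U z) -> exists z, C z /\ U z /\ ~ (W k z /\ ~ Z k z)) ->
  exists x, C x /\ forall k, ~ (W k x /\ ~ Z k x).
Proof.
  intros [x0 Cx0] HW HZ Hmiss.
  assert (Hstep : forall k Q, exists Q', trace_family B C Q ->
    trace_family B C Q' /\ trace_rel B rel C Q Q' /\ forall y, Q' y -> ~ (W k y /\ ~ Z k y)).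
  { intros k Q. destruct (classic (trace_family B C Q)) as [HQ | HQ]; [| exists Q; tauto].
    destruct (trace_shrink (W k) (Z k) Q (HW k) (HZ k) (Hmiss k) HQ)
      as [Q2 [HQ2 [HQ2Q HQ2avoid]]].
    destruct (trace_refine Q Q2 HQ HQ2 HQ2Q) as [Q' [HQ' [HQQ' HQ'Q2]]].
    exists Q'. intros _. split; [exact HQ' | split; [exact HQQ'|]].
    intros y Q'y. exact (HQ2avoid y (HQ'Q2 y Q'y)). }
  destruct (proj2 B_basis (fun _ => True) x0 (open_full _ T) I) as [U0 [HU0 [U0x0 _]]].
  pose (next := fun k Q => proj1_sig (constructive_indefinite_description _ (Hstep k Q))).
  assert (Hnext : forall k Q, trace_family B C Q -> trace_family B C (next k Q) /\
    trace_rel B rel C Q (next k Q) /\ forall y, next k Q y -> ~ (W k y /\ ~ Z k y)).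
  { intros k Q. exact (proj2_sig (constructive_indefinite_description _ (Hstep k Q))). }
  pose (chain := fix chain n := match n with
                  | 0 => fun w => C w /\ U0 w
                  | Datatypes.S k => next k (chain k) end).
  assert (Hchain : forall n, trace_family B C (chain n)).
  { induction n as [|n IH].
    - exists U0. split; [exact HU0 | split; [intro; simpl; tauto | eauto]].
    - exact (proj1 (Hnext n (chain n) IH)). }
  destruct (proj2 (proj2 (proj2 C_approx)) chain Hchain) as [x [Cx Hx]].
  { intro n. exact (proj1 (proj2 (Hnext n (chain n) (Hchain n)))). }
  exists x. split; [exact Cx|]. intro k.
  exact (proj2 (proj2 (Hnext k (chain k) (Hchain k))) x (Hx (Datatypes.S k))).
Qed.

End Baire.

(* In a hereditary approximation space every Delta^0_2 set A is constant on
   C ∩ W for some open W meeting a given nonempty closed set C: otherwise the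
   differences presenting A and its complement satisfy the hypotheses of
   approx_Baire, producing a point of C neither in A nor outside it. *)
Lemma Delta02_constant_on {E} (T : topology E) B rel (A C : set E) :
  hereditary_approx_relation T B rel -> Delta02 T A -> closed T C -> (exists x, C x) ->
  exists W, open T W /\ (exists z, C z /\ W z) /\ constant_on C W A.
Proof.
  intros [[HB _] Hher] [[U [V [HU [HV HA]]]] [U' [V' [HU' [HV' HA']]]]] HC HCne.
  apply NNPP; intro Hnone.
  pose (Wk := fun k => if Nat.even k then U (Nat.div2 k) else U' (Nat.div2 k)).
  pose (Zk := fun k => if Nat.even k then V (Nat.div2 k) else V' (Nat.div2 k)).
  destruct (approx_Baire T B rel C HB (Hher C HC) Wk Zk) as [x [Cx Hx]].
  - exact HCne.
  - intro k. unfold Wk. destruct (Nat.even k); auto.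
  - intro k. unfold Zk. destruct (Nat.even k); auto.
  - intros k W HW [z [Cz Wz]]. apply NNPP; intro Hin. apply Hnone.
    exists W. split; [exact (proj1 HB W HW) | split; [eauto|]].
    unfold constant_on, Wk, Zk in *. destruct (Nat.even k).
    + left. intros w Cw Ww. apply HA. exists (Nat.div2 k).
      apply NNPP; intro; apply Hin; eauto.
    + right. intros w Cw Ww. apply HA'. exists (Nat.div2 k).
      apply NNPP; intro; apply Hin; eauto.
  - destruct (classic (A x)) as [Ax | nAx].
    + apply HA in Ax. destruct Ax as [n Hn]. apply (Hx (2 * n)).
      unfold Wk, Zk. rewrite Nat.even_even, Nat.div2_double. exact Hn.
    + apply HA' in nAx. destruct nAx as [n Hn]. apply (Hx (2 * n + 1)).
      unfold Wk, Zk. rewrite Nat.even_odd, Nat.div2_odd'. exact Hn.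
Qed.
Section Derivative.
Context {E : Type} (T : topology E) (A : set E).

Definition der (G : set E) : set E := fun x =>
  G x /\ forall W, open T W -> W x ->
    (exists z, G z /\ W z /\ A z) /\ (exists z, G z /\ W z /\ ~ A z).

Definition inter (SS : set E -> Prop) : set E := fun x => forall S, SS S -> S x.

(* The stages of the transfinite derivation: the least family closed under
   der and arbitrary intersections (the empty intersection being E). *)
Inductive stage : set E -> Prop :=
| stage_inter : forall SS, (forall S, SS S -> stage S) -> stage (inter SS)
| stage_der : forall S, stage S -> stage (der S).

Lemma der_sub G : subset (der G) G.
Proof. intros x [Gx _]. exact Gx. Qed.

Lemma der_mono G G' : subset G G' -> subset (der G) (der G').
Proof.
  intros HG x [Gx Hosc]. split; [exact (HG x Gx)|]. intros W HW Wx.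
  destruct (Hosc W HW Wx) as [[z [Gz [Wz Az]]] [z' [Gz' [Wz' nAz']]]].
  split; [exists z | exists z']; auto.
Qed.

Lemma der_closed G : closed T G -> closed T (der G).
Proof.
  intro HG. unfold closed.
  apply (open_family T (fun W => W = (fun x => ~ G x) \/ (open T W /\
     ~ ((exists z, G z /\ W z /\ A z) /\ (exists z, G z /\ W z /\ ~ A z))))).
  - intros U [-> | [HU _]]; assumption.
  - intro x. split.
    + intro Hx. destruct (classic (G x)) as [Gx | nGx]; [| exists (fun x => ~ G x); auto].
      apply NNPP; intro Hno. apply Hx. split; [exact Gx|]. intros W HW Wx.
      apply NNPP; intro Hosc. apply Hno. exists W. auto.
    + intros [U [[-> | [HU Hosc]] Ux]] Hder.
      * exact (Ux (der_sub G x Hder)).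
      * exact (Hosc (proj2 Hder U HU Ux)).
Qed.

Lemma inter_closed (SS : set E -> Prop) :
  (forall S, SS S -> closed T S) -> closed T (inter SS).
Proof.
  intro H. unfold closed.
  apply (open_family T (fun W => exists S, SS S /\ W = (fun x => ~ S x))).
  - intros U [S [HS ->]]. exact (H S HS).
  - intro x; split.
    + intro Hx. apply NNPP; intro Hno. apply Hx. intros S HS. apply NNPP; intro nSx.
      apply Hno. exists (fun x => ~ S x). eauto.
    + intros [U [[S [HS ->]] nSx]] Hx. exact (nSx (Hx S HS)).
Qed.

Lemma stage_closed F : stage F -> closed T F.
Proof.
  induction 1 as [SS _ IH | S _ IH].
  - exact (inter_closed SS IH).
  - exact (der_closed S IH).
Qed.

Definition under_derivatives (c : set E) : Prop :=
  forall G, stage G -> subset c G -> ~ subset G c -> subset c (der G).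

Lemma stage_dichotomy_of c : under_derivatives c ->
  forall G, stage G -> subset c G \/ subset G (der c).
Proof.
  intros Hc G HG. induction HG as [SS _ IH | S HS IH].
  - destruct (classic (forall S, SS S -> subset c S)) as [Hall | Hsome].
    + left. intros y cy S HS. exact (Hall S HS y cy).
    + right. apply not_all_ex_not in Hsome. destruct Hsome as [S HS].
      apply imply_to_and in HS. destruct HS as [HS ncS].
      destruct (IH S HS) as [cS | Sder]; [contradiction|].
      intros y Hy. exact (Sder y (Hy S HS)).
  - destruct IH as [cS | Sder].
    + destruct (classic (subset S c)) as [Sc | nSc].
      * right. exact (der_mono S c Sc).
      * left. exact (Hc S HS cS nSc).
    + right. intros y Hy. exact (Sder y (der_sub S y Hy)).
Qed.

Lemma stage_under_derivatives c : stage c -> under_derivatives c.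
Proof.
  induction 1 as [SS HSS IH | c Hc IH]; intros G HG HcG nGc.
  - destruct (classic (exists S, SS S /\ subset S G /\ ~ subset G S))
      as [[S [HS [SG nGS]]] | Hno].
    + intros y Hy. exact (IH S HS G HG SG nGS y (Hy S HS)).
    + exfalso. apply nGc. intros y Gy S HS.
      destruct (stage_dichotomy_of S (IH S HS) G HG) as [SG | Gder].
      * destruct (classic (subset G S)) as [GS | nGS]; [exact (GS y Gy)|].
        exfalso. apply Hno. eauto.
      * exact (der_sub S y (Gder y Gy)).
  - destruct (stage_dichotomy_of c IH G HG) as [cG | Gder]; [|contradiction].
    destruct (classic (subset G c)) as [Gc | nGc'].
    + exact (der_mono c G cG).
    + intros y Hy. exact (IH G HG cG nGc' y (der_sub c y Hy)).
Qed.

Lemma stage_dichotomy F G : stage F -> stage G -> subset F G \/ subset G (der F).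
Proof. intros HF. exact (stage_dichotomy_of F (stage_under_derivatives F HF) G). Qed.

Lemma stage_chain F G : stage F -> stage G -> subset F G \/ subset G F.
Proof.
  intros HF HG. destruct (stage_dichotomy F G HF HG) as [FG | Gder]; [left; exact FG|].
  right. intros y Gy. exact (der_sub F y (Gder y Gy)).
Qed.

Definition scattered : Prop :=
  forall F, stage F -> (exists x, F x) -> exists y, F y /\ ~ der F y.

Definition stage_sup (SS : set E -> Prop) : set E :=
  inter (fun G => stage G /\ forall S, SS S -> subset S G).

Lemma stage_sup_stage SS : stage (stage_sup SS).
Proof. apply stage_inter. intros G [HG _]. exact HG. Qed.

Lemma stage_sup_upper SS S : SS S -> subset S (stage_sup SS).
Proof. intros HS y Sy G [_ HG]. exact (HG S HS y Sy). Qed.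

(* When the derivation terminates, every nonempty family of nonempty stages
   has a largest member: otherwise the members all lie in the derivative of
   their supremum, which then equals its own derivative. *)
Lemma largest_stage (SS : set E -> Prop) : scattered ->
  (forall S, SS S -> stage S) -> (exists S x, SS S /\ S x) ->
  exists S, SS S /\ subset (stage_sup SS) S.
Proof.
  intros Hscat Hstages [S0 [x0 [HS0 S0x0]]].
  pose proof (stage_sup_stage SS) as Hsup.
  apply NNPP; intro Hno.
  assert (Hin_der : forall S, SS S -> subset S (der (stage_sup SS))).
  { intros S HS. destruct (stage_dichotomy _ S Hsup (Hstages S HS)) as [supS | Sder];
      [exfalso; apply Hno; eauto | exact Sder]. }
  assert (Hsup_der : subset (stage_sup SS) (der (stage_sup SS))).
  { intros y Hy. apply Hy. split; [exact (stage_der _ Hsup) | exact Hin_der]. }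
  destruct (Hscat _ Hsup (ex_intro _ x0 (stage_sup_upper SS S0 HS0 x0 S0x0)))
    as [y [Hy nder]].
  exact (nder (Hsup_der y Hy)).
Qed.

Definition rank (x : E) : set E := inter (fun G => stage G /\ G x).

Lemma rank_stage x : stage (rank x).
Proof. apply stage_inter. intros G [HG _]. exact HG. Qed.

Lemma rank_mem x : rank x x.
Proof. intros G [_ Gx]. exact Gx. Qed.

Lemma rank_least x G : stage G -> G x -> subset (rank x) G.
Proof. intros HG Gx y Hy. exact (Hy G (conj HG Gx)). Qed.

Lemma rank_not_der x : scattered -> ~ der (rank x) x.
Proof.
  intros Hscat Hder.
  assert (Hsub : subset (rank x) (der (rank x)))
    by exact (rank_least x _ (stage_der _ (rank_stage x)) Hder).
  destruct (Hscat _ (rank_stage x) (ex_intro _ x (rank_mem x))) as [y [Hy nder]].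
  exact (nder (Hsub y Hy)).
Qed.

Lemma der_above_rank x G : stage G -> ~ subset G (rank x) -> der G x.
Proof.
  intros HG nGr. destruct (stage_dichotomy G (rank x) HG (rank_stage x)) as [Gr | rder];
    [contradiction | exact (rder x (rank_mem x))].
Qed.

Definition patch (F W : set E) : Prop :=
  open T W /\ (exists z, F z /\ W z) /\ constant_on F W A.

Lemma constant_on_not_der F W z : constant_on F W A -> open T W -> W z -> ~ der F z.
Proof.
  intros Hconst HW Wz [_ Hosc].
  destruct (Hosc W HW Wz) as [[z1 [F1 [W1 A1]]] [z2 [F2 [W2 nA2]]]].
  destruct Hconst as [HA | HnA]; [exact (nA2 (HA z2 F2 W2)) | exact (HnA z1 F1 W1 A1)].
Qed.

Lemma scattered_of_patches :
  (forall F, stage F -> (exists x, F x) -> exists W, patch F W) -> scattered.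
Proof.
  intros Hpatch F HF Hne. destruct (Hpatch F HF Hne) as [W [HW [[z [Fz Wz]] Hconst]]].
  exists z. split; [exact Fz | exact (constant_on_not_der F W z Hconst HW Wz)].
Qed.

(* Two stages sharing a patch coincide: by the dichotomy the smaller one would
   meet W inside the derivative of the larger one. *)
Lemma patch_separates F G W : stage F -> stage G -> patch F W -> patch G W -> F = G.
Proof.
  intros HF HG [HW [[zF [FzF WzF]] cF]] [_ [[zG [GzG WzG]] cG]].
  apply set_ext. intro y. split; intro Hy.
  - destruct (stage_dichotomy F G HF HG) as [FG | Gder]; [exact (FG y Hy)|].
    exfalso. exact (constant_on_not_der F W zG cF HW WzG (Gder zG GzG)).
  - destruct (stage_dichotomy G F HG HF) as [GF | Fder]; [exact (GF y Hy)|].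
    exfalso. exact (constant_on_not_der G W zF cG HW WzF (Fder zF FzF)).
Qed.

Definition stage_code_injective (code : set E -> nat) : Prop :=
  forall F G, stage F -> stage G -> (exists x, F x) -> (exists x, G x) ->
    code F = code G -> F = G.

(* With a countable basis, a patch of each nonempty stage can be shrunk to a
   basic set; its index codes the stage injectively by patch_separates. *)
Lemma stage_code_exists : second_countable T ->
  (forall F, stage F -> (exists x, F x) -> exists W, patch F W) ->
  exists code, stage_code_injective code.
Proof.
  intros [B [b [[B_open B_base] Henum]]] Hpatch.
  assert (Hindex : forall F, exists n, stage F -> (exists x, F x) -> patch F (b n)).
  { intro F. destruct (classic (stage F /\ exists x, F x)) as [[HF Hne] | Hno];
      [| exists 0; tauto].
    destruct (Hpatch F HF Hne) as [W [HW [[z [Fz Wz]] Hconst]]].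
    destruct (B_base W z HW Wz) as [W2 [HW2 [W2z W2W]]].
    destruct (Henum W2 HW2) as [n ->]. exists n. intros _ _.
    split; [exact (B_open _ HW2) | split; [eauto|]].
    destruct Hconst as [HA | HnA]; [left | right]; intros y Fy Wy;
      [apply HA | apply HnA]; auto. }
  exists (fun F => proj1_sig (constructive_indefinite_description _ (Hindex F))).
  intros F G HF HG nF nG Hcode.
  pose proof (proj2_sig (constructive_indefinite_description _ (Hindex F)) HF nF) as PF.
  pose proof (proj2_sig (constructive_indefinite_description _ (Hindex G)) HG nG) as PG.
  simpl in PF, PG. rewrite Hcode in PF.
  exact (patch_separates F G _ HF HG PF PG).
Qed.

Section StageOrdinal.

(* Indices: each nonempty stage F, doubled into (F, false) < (F, true);
   larger stages come first. *)
Definition nstage : Type := {F : set E | stage F /\ exists x, F x}.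

Definition level (e : nstage * bool) : set E := proj1_sig (fst e).

Definition stage_lt (e e' : nstage * bool) : Prop :=
  (subset (level e') (level e) /\ ~ subset (level e) (level e')) \/
  (level e = level e' /\ snd e = false /\ snd e' = true).

Lemma nstage_eq (p q : nstage) : proj1_sig p = proj1_sig q -> p = q.
Proof.
  destruct p as [P HP], q as [Q HQ]. simpl. intros <-.
  f_equal. apply proof_irrelevance.
Qed.

Lemma stage_lt_irrefl e : ~ stage_lt e e.
Proof. intros [[_ H] | [_ [H1 H2]]]; [exact (H (fun y Hy => Hy)) | congruence]. Qed.

Lemma stage_lt_trans e1 e2 e3 : stage_lt e1 e2 -> stage_lt e2 e3 -> stage_lt e1 e3.
Proof.
  unfold stage_lt.
  intros [[H21 n12] | [E12 [b1 b2]]] [[H32 n23] | [E23 [b2' b3]]].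
  - left. split; [intros y Hy; exact (H21 y (H32 y Hy))|].
    intro H13. apply n12. intros y Hy. exact (H32 y (H13 y Hy)).
  - left. rewrite <- E23. split; assumption.
  - left. rewrite E12. split; assumption.
  - congruence.
Qed.

Lemma stage_lt_total e e' : stage_lt e e' \/ e = e' \/ stage_lt e' e.
Proof.
  destruct e as [[P [HP HPne]] b], e' as [[Q [HQ HQne]] b']. unfold stage_lt, level. simpl.
  destruct (classic (subset P Q)) as [PQ | nPQ]; destruct (classic (subset Q P)) as [QP | nQP].
  - assert (P = Q) as <- by (apply set_ext; intro; split; auto).
    assert (Heq : exist _ P (conj HP HPne) = exist _ P (conj HQ HQne) :> nstage)
      by (apply nstage_eq; reflexivity).
    rewrite Heq.
    destruct b, b'; [right; left | right; right; right | left; right | right; left]; auto.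
  - right; right. left. auto.
  - left. left. auto.
  - exfalso. destruct (stage_chain P Q HP HQ); auto.
Qed.

Hypothesis Hscat : scattered.

(* A minimal index of an inhabited predicate sits on the largest stage
   occurring in it (largest_stage), preferably with tag false. *)
Lemma stage_lt_wf : well_founded stage_lt.
Proof.
  apply well_founded_of_minimal. intros P [e0 Pe0].
  pose (SS := fun F => exists e, P e /\ level e = F).
  destruct (largest_stage SS Hscat) as [S [[e1 [Pe1 He1]] HS]].
  - intros F [e [_ <-]]. exact (proj1 (proj2_sig (fst e))).
  - destruct (proj2 (proj2_sig (fst e0))) as [x0 Hx0].
    exists (level e0), x0. split; [exists e0; auto | exact Hx0].
  - assert (Htop : forall y, P y -> subset (level y) S).
    { intros y Py z Hz. apply HS.
      exact (stage_sup_upper SS _ (ex_intro _ y (conj Py eq_refl)) z Hz). }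
    destruct (classic (exists e, P e /\ level e = S /\ snd e = false)) as [[e [Pe [He Hb]]] | Hnf].
    + exists e. split; [exact Pe|]. intros y [[_ nyS] | [_ [_ Hb']]] Py; [|congruence].
      apply nyS. rewrite He. exact (Htop y Py).
    + exists e1. split; [exact Pe1|]. intros y [[_ nyS] | [Hl [Hb _]]] Py.
      * apply nyS. rewrite He1. exact (Htop y Py).
      * apply Hnf. exists y. rewrite Hl. auto.
Qed.

Variable code : set E -> nat.
Hypothesis code_inj : stage_code_injective code.

Definition index_code (e : nstage * bool) : nat :=
  2 * code (level e) + (if snd e then 1 else 0).

Lemma index_code_inj e e' : index_code e = index_code e' -> e = e'.
Proof.
  destruct e as [[P [HP HPne]] b], e' as [[Q [HQ HQne]] b']. unfold index_code, level. simpl.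
  intro Heq. assert (code P = code Q /\ b = b') as [Hc <-] by (destruct b, b'; split; auto; lia).
  rewrite (nstage_eq (exist _ P (conj HP HPne)) (exist _ Q (conj HQ HQne))
             (code_inj P Q HP HQ HPne HQne Hc)).
  reflexivity.
Qed.

Definition stage_ordinal : cord :=
  Cord (nstage * bool) stage_lt stage_lt_irrefl stage_lt_trans stage_lt_total stage_lt_wf
    index_code index_code_inj.

Lemma osucc_tag (p : nstage) : osucc stage_lt (p, false) (p, true).
Proof.
  split; [right; auto|].
  intros [q b] [[H1 n1] | [E1 [_ Hb]]] [[H2 n2] | [E2 [Hb' _]]]; unfold level in *; simpl in *.
  - exact (n1 H2).
  - apply n1. rewrite E2. intros y Hy; exact Hy.
  - apply n2. rewrite E1. intros y Hy; exact Hy.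
  - congruence.
Qed.

(* The parity of an index is its tag: (F, false) is a limit or follows some
   (G, true), and (F, true) follows (F, false). *)
Lemma opar_false e : snd e = false -> opar stage_lt e false.
Proof.
  induction (stage_lt_wf e) as [e _ IH]. intro He.
  destruct (classic (exists g, osucc stage_lt g e)) as [[[q b] Hg] | Hlim];
    [| constructor 1; exact Hlim].
  destruct b.
  - assert (Hq : stage_lt (q, false) e).
    { destruct Hg as [[Hl | [_ [Hb _]]] _]; [left; exact Hl | discriminate]. }
    exact (opar_succ _ _ _ true Hg (opar_succ _ _ _ false (osucc_tag q) (IH _ Hq eq_refl))).
  - exfalso. destruct e as [p eb]. simpl in He. subst eb.
    apply (proj2 Hg (q, true)); [right; simpl; auto|].
    destruct Hg as [[Hl | [_ [_ Hb]]] _]; [left; exact Hl | discriminate].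
Qed.

Lemma opar_tag e : opar stage_lt e (snd e).
Proof.
  destruct e as [p []]; simpl.
  - exact (opar_succ _ _ _ false (osucc_tag p) (opar_false (p, false) eq_refl)).
  - exact (opar_false (p, false) eq_refl).
Qed.

(* The ordinal itself is even: it is a limit, or its last index is (F, true). *)
Lemma tpar_stage_ordinal : tpar stage_ordinal false.
Proof.
  destruct (classic (exists m, forall y, ~ clt stage_ordinal m y)) as [[[p b] Hm] | Hno].
  - left. exists (p, b). split; [exact Hm|]. destruct b.
    + exact (opar_tag (p, true)).
    + exfalso. apply (Hm (p, true)). right. auto.
  - right. auto.
Qed.

Lemma selected_iff e : selected stage_ordinal e <-> snd e = true.
Proof.
  split.
  - intros [pb [pa [Hpb [Hpa Hne]]]].
    rewrite (opar_unique stage_ordinal _ _ _ Hpb (opar_tag e)) in Hne.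
    rewrite (tpar_unique _ _ _ Hpa tpar_stage_ordinal) in Hne.
    destruct (snd e); congruence.
  - intro He. exists (snd e), false. split; [exact (opar_tag e)|].
    split; [exact tpar_stage_ordinal | rewrite He; discriminate].
Qed.

Definition refuting_interior (F : set E) : set E :=
  fun x => exists W, open T W /\ W x /\ forall z, F z -> W z -> ~ A z.

Definition level_set (e : nstage * bool) : set E :=
  if snd e then fun x => ~ der (level e) x
  else fun x => ~ level e x \/ refuting_interior (level e) x.

Lemma level_set_open e : open T (level_set e).
Proof.
  destruct e as [[F [HF HFne]] []]; unfold level_set, level; simpl.
  - exact (der_closed F (stage_closed F HF)).
  - apply open_or; [exact (stage_closed F HF)|].
    apply (open_family T (fun W => open T W /\ forall z, F z -> W z -> ~ A z)).
    + intros W [HW _]. exact HW.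
    + intro x; split.
      * intros [W [HW [Wx HWA]]]. eauto.
      * intros [W [[HW HWA] Wx]]. exists W. auto.
Qed.

Definition rank_index (x : E) : nstage :=
  exist _ (rank x) (conj (rank_stage x) (ex_intro _ x (rank_mem x))).

Lemma level_set_above_rank x e : ~ subset (level e) (rank x) -> ~ level_set e x.
Proof.
  intro Habove. pose proof (der_above_rank x _ (proj1 (proj2_sig (fst e))) Habove) as Hder.
  unfold level_set. destruct (snd e).
  - intro H. exact (H Hder).
  - intros [nx | [W [HW [Wx HWA]]]]; [exact (nx (der_sub _ x Hder))|].
    destruct (proj2 Hder W HW Wx) as [[z [Fz [Wz Az]]] _]. exact (HWA z Fz Wz Az).
Qed.

Lemma level_set_rank_false x : level_set (rank_index x, false) x <-> ~ A x.
Proof.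
  unfold level_set, level. simpl. split.
  - intros [nx | [W [_ [Wx HWA]]]].
    + contradiction (nx (rank_mem x)).
    + exact (HWA x (rank_mem x) Wx).
  - intro nAx. right. apply NNPP; intro Hno. apply (rank_not_der x Hscat).
    split; [exact (rank_mem x)|]. intros W HW Wx.
    split; [| exists x; auto using rank_mem].
    apply NNPP; intro HnoA. apply Hno. exists W. split; [exact HW | split; [exact Wx|]].
    intros z Fz Wz Az. apply HnoA. eauto.
Qed.

Lemma first_index_of_A x : A x -> first_index stage_ordinal level_set (rank_index x, true) x.
Proof.
  intro Ax. split; [exact (rank_not_der x Hscat)|].
  intros [q b] [[_ Habove] | [Hl [Hb _]]]; [exact (level_set_above_rank x _ Habove)|].
  simpl in Hb. subst b. unfold level in Hl. simpl in Hl.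
  rewrite (nstage_eq q (rank_index x) Hl).
  intro H. exact (proj1 (level_set_rank_false x) H Ax).
Qed.

Lemma first_index_of_not_A x :
  ~ A x -> first_index stage_ordinal level_set (rank_index x, false) x.
Proof.
  intro nAx. split; [exact (proj2 (level_set_rank_false x) nAx)|].
  intros g [[_ Habove] | [_ [_ Hb]]]; [exact (level_set_above_rank x _ Habove) | discriminate].
Qed.

Lemma D_op_stage_ordinal x : D_op stage_ordinal level_set x <-> A x.
Proof.
  rewrite D_op_first_index. split.
  - intros [e [Hsel He]]. apply NNPP; intro nAx.
    rewrite (first_index_unique _ _ _ _ _ He (first_index_of_not_A x nAx)) in Hsel.
    apply selected_iff in Hsel. discriminate.
  - intro Ax. exists (rank_index x, true). split.
    + apply selected_iff. reflexivity.
    + exact (first_index_of_A x Ax).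
Qed.

End StageOrdinal.

End Derivative.

Theorem corollary3p16 (E : Type) (T : topology E) :
  hereditary_approx_space T -> second_countable T ->
  forall S : set E, D_union T S <-> Delta02 T S.
Proof.
  intros [B [rel Hher]] Hcountable S. split.
  - intros [a Ha]. exact (D_class_Delta02 T a S Ha).
  - intro HS.
    assert (Hpatch : forall F, stage T S F -> (exists x, F x) -> exists W, patch T S F W).
    { intros F HF Hne.
      exact (Delta02_constant_on T B rel S F Hher HS (stage_closed T S F HF) Hne). }
    pose proof (scattered_of_patches T S Hpatch) as Hscat.
    destruct (stage_code_exists T S Hcountable Hpatch) as [code Hcode].
    exists (stage_ordinal T S Hscat code Hcode), (level_set T S). split.
    + exact (level_set_open T S).
    + intro x. symmetry. exact (D_op_stage_ordinal T S Hscat code Hcode x).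
Qed.
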